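(* Let $h\in\mathbb{F}[x]$ with $\deg h\ge1$ and $\mathcal{A}=\mathrm{Aut}_{\mathbb{F}}(A_h)$. Then $A_h^{\mathcal{A}}=\mathbb{F}[x]^{\mathcal{A}}$, and: (i) if $\mathcal{A}=\{\phi_f:f\in\mathbb{F}[x]\}$ then $\mathbb{F}[x]^{\mathcal{A}}=\mathbb{F}[x]$; if $\mathcal{A}=\{\phi_f\}\rtimes\tau_{\mathbb{P}}$ with $\tau_{\mathbb{P}}\cong\mathbb{F}^*$ (i.e. $h=\gamma(x-\lambda)^n$ with $\lambda\in\mathbb{F}$) and $\mathbb{F}$ is infinite, then $\mathbb{F}[x]^{\mathcal{A}}=\mathbb{F}$; (ii) $\mathbb{F}[x]^{\mathcal{A}}=\mathbb{F}[t]$ where: (a) if $\tau_{\mathbb{P}}=\tau_{1,\mathbb{G}}$, then $t(x)=\prod_{\nu\in\mathbb{G}}(x+\nu)$; (b) if $\tau_{\mathbb{P}}=\tau_{1,\mathbb{G}}\rtimes\langle\tau_{\alpha,\beta}\rangle$ with $\alpha$ a primitive $\ell$-th root of unity for some $\ell>1$, then $t(x)=\prod_{\nu\in\mathbb{G}}\left(x+\frac{\beta}{\alpha-1}+\nu\right)^{\ell}$.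
   Context: $\mathbb{F}$ is an arbitrary field. For $h\in\mathbb{F}[x]$, $A_h$ is the unital associative $\mathbb{F}$-algebra generated by $x,\hat y$ with defining relation $\hat yx-x\hat y=h$. For a group $\mathcal{A}$ of automorphisms and a subalgebra $S$, $S^{\mathcal{A}}=\{s\in S:\omega(s)=s\ \forall\omega\in\mathcal{A}\}$. Let $\mathbb{P}=\{(\alpha,\beta)\in\mathbb{F}^*\times\mathbb{F}: h(\alpha x+\beta)=\alpha^{\deg h}h(x)\}$; for $(\alpha,\beta)\in\mathbb{P}$, $\tau_{\alpha,\beta}$ is the automorphism of $A_h$ with $x\mapsto\alpha x+\beta$, $\hat y\mapsto\alpha^{\deg h-1}\hat y$; $\tau_{\mathbb{P}}=\{\tau_{\alpha,\beta}\}$. For $f\in\mathbb{F}[x]$, $\phi_f$ is the automorphism with $x\mapsto x$, $\hat y\mapsto\hat y+f$. It is known that $\mathcal{A}=\{\phi_f\}\rtimes\tau_{\mathbb{P}}$. $\mathbb{G}=\{\nu\in\mathbb{F}:(1,\nu)\in\mathbb{P}\}$, a finite additive subgroup, and $\tau_{1,\mathbb{G}}=\{\tau_{1,\nu}:\nu\in\mathbb{G}\}$. *)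

From HB Require Import structures.
From mathcomp Require Import all_boot all_order all_algebra.
Set Implicit Arguments. Unset Strict Implicit. Unset Printing Implicit Defensive.
Import GRing.Theory.
Local Open Scope ring_scope.

(* Model of A_h: the Ore extension F[x][yhat; delta], delta = h * d/dx.
   An element  \sum_j g_j(x) yhat^j  (normal form, coefficients on the left)
   is represented by the polynomial  \sum_j g_j%:P * 'X^j : {poly {poly F}}
   (outer variable 'X = yhat, inner variable = x).  By the PBW theorem this
   is a bijection with A_h; multiplication is given by the rule
   yhat^i g = \sum_m 'C(i,m) delta^m(g) yhat^(i-m). *)
Section Ah.
Variable F : fieldType.
Variable h : {poly F}.

Definition AH := {poly {poly F}}.

Definition deltaH (g : {poly F}) : {poly F} := h * g^`().

Definition mulA (a b : AH) : AH :=
  \sum_(i < size a) \sum_(j < size b) \sum_(m < i.+1)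
     ((a`_i * iter m deltaH b`_j) *+ 'C(i, m)) *: 'X^(i - m + j).

Definition powA (v : AH) (n : nat) : AH := iter n (mulA v) 1.

(* The algebra endomorphism of A_h with x |-> u (in F[x]) and yhat |-> v. *)
Definition substA (u : {poly F}) (v : AH) (a : AH) : AH :=
  \sum_(i < size a) mulA ((a`_i \Po u)%:P) (powA v i).

Definition phiA (f : {poly F}) : AH -> AH := substA 'X ('X + f%:P).

Definition inP (al be : F) : bool :=
  (al != 0) && (h \Po (al *: 'X + be%:P) == al ^+ (size h).-1 *: h).

(* tau_{alpha,beta} : x |-> alpha x + beta, yhat |-> alpha^(deg h - 1) yhat *)
Definition tauA (al be : F) : AH -> AH :=
  substA (al *: 'X + be%:P) ((al ^+ (size h).-2)%:P *: 'X).

Definition fixedA (a : AH) : Prop :=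
  (forall f, phiA f a = a) /\ (forall al be, inP al be -> tauA al be a = a).

End Ah.

(* composition of affine pairs: tau_p \o tau_q = tau_(acomp p q) *)
Definition acomp (F : fieldType) (p q : F * F) : F * F :=
  (p.1 * q.1, q.1 * p.2 + q.2).
Definition apow (F : fieldType) (p : F * F) (k : nat) : F * F :=
  iter k (acomp p) (1, 0).

From Pilot Require Import Defs.
From HB Require Import structures.
From mathcomp Require Import all_boot all_order all_algebra.
From mathcomp Require Import zify ring.
From Stdlib Require Import Classical.
Import GRing.Theory.
Local Open Scope ring_scope.

(* 1. Elements of A_h are written sum_i a_i(x) yhat^i.  If a is fixed by
      phi_(x^k) for k large, the yhat-free part of phi_(x^k)(a) is
      sum_i a_i c_i with c_i monic of degree i k; comparing degrees with
      a_0 shows a has no yhat.  So A_h^A = F[x]^A, and on F[x] the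
      automorphism tau_(al,be) is the substitution g |-> g(al x + be).
   2. Translations: if s lists a finite additive group G, the polynomials
      invariant under x |-> x + nu (nu in G) are exactly those in
      t = prod_(nu in G) (x + nu): divide by t, the remainder is invariant of
      degree < #|G| hence constant, and induct on the quotient.
   3. Scalings: invariance under x |-> al x for a primitive l-th root al
      means being a polynomial in x^l; since t(al x) = al t(x) when al G = G,
      the invariants of G and x |-> al x are the polynomials in t^l.
   4. Case (ii)(b) reduces to 3 by conjugating with the translation by the
      fixed point of x |-> al x + be; case (i) for h = ga (x - la)^n uses
      that every slope occurs, so over an infinite field the leading
      coefficient of an invariant of positive degree would give infinitely
      many roots of x^d - 1. *)

Section AffineSubstitutions.
Context {F : fieldType}.
Implicit Types (p q g : {poly F}) (a b c : F).

Definition lin a b : {poly F} := a *: 'X + b%:P.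

Lemma lin_comp a b c d : lin a b \Po lin c d = lin (a * c) (a * d + b).
Proof.
by rewrite /lin comp_polyD comp_polyZ comp_polyX comp_polyC scalerDr scalerA
  scale_polyC polyCD addrA.
Qed.

Lemma linX b : 'X + b%:P = lin 1 b. Proof. by rewrite /lin scale1r. Qed.

Lemma comp_lin10 p : p \Po lin 1 0 = p.
Proof. by rewrite /lin scale1r addr0 comp_polyXr. Qed.

Lemma size_lin a b : a != 0 -> size (lin a b) = 2.
Proof.
move=> a0; rewrite /lin size_polyDl size_scale // ?size_polyX //.
by apply: leq_ltn_trans (size_polyC_leq1 _) _.
Qed.

Lemma lead_lin a b : a != 0 -> lead_coef (lin a b) = a.
Proof.
move=> a0; rewrite /lin lead_coefDl ?lead_coefZ ?lead_coefX ?mulr1 //.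
rewrite size_scale // size_polyX.
by apply: leq_ltn_trans (size_polyC_leq1 _) _.
Qed.

Lemma horner_lin a b x : (lin a b).[x] = a * x + b.
Proof. by rewrite /lin hornerD hornerZ hornerX hornerC. Qed.

Lemma comp_polyI (U p q : {poly F}) : (1 < size U)%N -> p \Po U = q \Po U -> p = q.
Proof.
move=> sU E; apply/eqP; rewrite -subr_eq0 -(comp_poly_eq0 _ sU).
by rewrite comp_polyB E subrr.
Qed.

Lemma comp_lin_inj a b p q : a != 0 -> p \Po lin a b = q \Po lin a b -> p = q.
Proof. by move=> a0; apply: comp_polyI; rewrite size_lin. Qed.

Lemma coef_comp_linZ p a i : (p \Po lin a 0)`_i = a ^+ i * p`_i.
Proof.
elim/poly_ind: p i => [|p c IH] i; first by rewrite comp_poly0 !coef0 mulr0.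
rewrite comp_poly_MXaddC {2}/lin addr0 -scalerAr !coefD coefZ !coefMX !coefC.
case: i => [|i]; first by rewrite mulr0 expr0 !add0r mul1r.
by rewrite IH !addr0 exprS mulrA.
Qed.

Lemma comp_lin1K c p : (p \Po lin 1 c) \Po lin 1 (- c) = p.
Proof. by rewrite -!linX polyCN comp_polyXaddC_K. Qed.

Lemma comp_lin_scale_expr p a k : p \Po lin a 0 = p -> p \Po lin (a ^+ k) 0 = p.
Proof.
move=> pinv; elim: k => [|k IH]; first by rewrite comp_lin10.
have -> : lin (a ^+ k.+1) 0 = lin a 0 \Po lin (a ^+ k) 0.
  by rewrite lin_comp mulr0 addr0 exprS.
by rewrite comp_polyA pinv IH.
Qed.

(* Invariance under x |-> al x for a primitive l-th root of unity al forces
   only exponents divisible by l: q is a polynomial in x^l. *)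
Lemma scale_invariant_Xn {q al l} : l.-primitive_root al ->
  q \Po lin al 0 = q -> exists r, q = r \Po 'X^l.
Proof.
move=> prim qinv; have l_gt0 := prim_order_gt0 prim.
have l_dvd i : q`_i != 0 -> (l %| i)%N.
  move=> qi; have := congr1 (fun p => p`_i) qinv; rewrite /= coef_comp_linZ => e.
  have : (al ^+ i - 1) * q`_i = 0 by rewrite mulrBl e mul1r subrr.
  by move/eqP; rewrite mulf_eq0 (negbTE qi) orbF subr_eq0 -(prim_order_dvd prim).
exists (\poly_(j < size q) q`_(j * l)); apply/polyP => i.
rewrite coef_comp_poly_Xn // coef_poly.
case: ifP => dvd; last by apply/eqP; apply: (contraFT (l_dvd i) dvd).
case: ltnP => hs; first by rewrite divnK.
rewrite nth_default //; apply: leq_trans hs _.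
by rewrite -{2}(divnK dvd) leq_pmulr.
Qed.

End AffineSubstitutions.

Lemma perm_map_stable (T : eqType) (s : seq T) (f : T -> T) : uniq s ->
  injective f -> {in s, forall x, f x \in s} -> perm_eq (map f s) s.
Proof.
move=> us fi fs; apply: uniq_perm; rewrite ?map_inj_uniq //.
apply: (uniq_min_size _ _ _).2; rewrite ?map_inj_uniq ?size_map //.
by move=> y /mapP [x xs ->]; apply: fs.
Qed.

Section OrbitPolynomial.
Context {F : fieldType}.
Variable s : seq F.
Implicit Types (p q g : {poly F}) (a b : F).

Definition orbp : {poly F} := \prod_(nu <- s) ('X + nu%:P).

Lemma size_orbp : size orbp = (size s).+1.
Proof.
have -> : orbp = \prod_(nu <- s) ('X - (- nu)%:P).
  by apply: eq_bigr => nu _; rewrite polyCN opprK.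
by rewrite size_prod_XsubC.
Qed.

Lemma orbp_comp_lin a b : orbp \Po lin a b = \prod_(nu <- s) lin a (b + nu).
Proof.
rewrite /orbp rmorph_prod /=; apply: eq_bigr => nu _.
by rewrite linX lin_comp !mul1r.
Qed.

Hypothesis s_uniq : uniq s.

(* A translation-invariant polynomial of degree < #|G| is constant, since
   it takes the value p(0) at every point of G. *)
Lemma small_transl_invariant_const p : (size p <= size s)%N ->
  (forall b, b \in s -> p \Po lin 1 b = p) -> p = (p.[0])%:P.
Proof.
move=> sp pinv; have [->|pn0] := eqVneq p 0; first by rewrite horner0.
apply/eqP; rewrite -subr_eq0; apply/negPn/negP => p0.
have roots : all (root (p - (p.[0])%:P)) s.
  apply/allP => nu nus; rewrite /root hornerD hornerN hornerC subr_eq0.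
  by rewrite -{2}(pinv nu nus) horner_comp horner_lin mulr0 add0r.
have := max_poly_roots p0 roots s_uniq; apply/negP; rewrite -leqNgt.
apply: leq_trans (size_polyD _ _) _; rewrite size_polyN geq_max sp /=.
apply: leq_trans (size_polyC_leq1 _) (leq_trans _ sp).
by rewrite size_poly_gt0.
Qed.

Hypotheses (s0 : 0 \in s) (s_addr : forall a b, a \in s -> b \in s -> a + b \in s).

(* Translating by an element of the group G permutes the factors of orbp. *)
Lemma orbp_transl b : b \in s -> orbp \Po lin 1 b = orbp.
Proof.
move=> bs; rewrite orbp_comp_lin.
have pe : perm_eq (map (fun nu => b + nu) s) s.
  by apply: perm_map_stable s_uniq (addrI b) _ => nu nus; apply: s_addr.
rewrite -[RHS](perm_big _ pe) big_map.
by apply: eq_bigr => nu _; rewrite linX.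
Qed.

(* Quotient and remainder of a translation-invariant polynomial by orbp are
   again translation invariant, by uniqueness of Euclidean division. *)
Lemma transl_invariant_divp {g b} : g \Po lin 1 b = g -> b \in s ->
  (g %/ orbp) \Po lin 1 b = g %/ orbp /\ (g %% orbp) \Po lin 1 b = g %% orbp.
Proof.
move=> ginv bs.
have E : g = ((g %/ orbp) \Po lin 1 b) * orbp + ((g %% orbp) \Po lin 1 b).
  by rewrite -{1}ginv {1}(divp_eq g orbp) comp_polyD comp_polyM orbp_transl.
have := divp_modpP E; rewrite size_comp_poly2 ?size_lin ?oner_neq0 //.
by rewrite ltn_modp -size_poly_eq0 size_orbp => /(_ isT) [-> ->].
Qed.

(* The invariants of the translations by G are the polynomials in orbp:
   expand g in base orbp, every digit being constant. *)
Lemma transl_invariant_comp g : (forall b, b \in s -> g \Po lin 1 b = g) ->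
  exists q, g = q \Po orbp.
Proof.
move: {2}(size g) (leqnn (size g)) => n; elim: n g => [|n IH] g sg ginv.
  by move: sg; rewrite leqn0 size_poly_eq0 => /eqP ->; exists 0; rewrite comp_poly0.
have orbp0 : orbp != 0 by rewrite -size_poly_eq0 size_orbp.
have divp_inv b (bs : b \in s) := transl_invariant_divp (ginv b bs) bs.
have rconst : g %% orbp = ((g %% orbp).[0])%:P.
  apply: small_transl_invariant_const => [|b bs].
    by rewrite -ltnS -size_orbp ltn_modp.
  exact: (divp_inv b bs).2.
have [q1 q1E] : exists q1, g %/ orbp = q1 \Po orbp.
  apply: IH => [|b bs]; last exact: (divp_inv b bs).1.
  rewrite size_divp // size_orbp /= leq_subLR; apply: leq_trans sg _.
  by rewrite addnC -addn1 leq_add2l; case: (s) s0.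
exists (q1 * 'X + ((g %% orbp).[0])%:P).
by rewrite comp_poly_MXaddC -q1E -rconst -divp_eq.
Qed.

Lemma transl_invariantP g :
  (forall b, b \in s -> g \Po lin 1 b = g) <-> exists q, g = q \Po orbp.
Proof.
split; first exact: transl_invariant_comp.
by move=> [q ->] b bs; rewrite -comp_polyA orbp_transl.
Qed.

Section Scaling.
Variables (al : F) (l : nat).
Hypotheses (al_prim : l.-primitive_root al)
  (s_mulr : forall nu, nu \in s -> al * nu \in s).

Lemma prim_root_neq0 : al != 0.
Proof.
apply: contra_eq_neq (prim_expr_order al_prim) => ->.
by rewrite expr0n gtn_eqF ?(prim_order_gt0 al_prim) // eq_sym oner_neq0.
Qed.

(* orbp is homogeneous of weight 1 under x |-> al x: comparing the
   coefficients of x in orbp(al x) = al^#|G| orbp(x) gives al^#|G| = al. *)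
Lemma orbp_scale : orbp \Po lin al 0 = al *: orbp.
Proof.
have pe : perm_eq (map (fun nu => al * nu) s) s.
  by apply: perm_map_stable s_uniq (mulfI prim_root_neq0) _.
have orbpZ : orbp \Po lin al 0 = al ^+ size s *: orbp.
  rewrite orbp_comp_lin -(perm_big _ pe) big_map.
  transitivity (\prod_(nu <- s) (al *: ('X + nu%:P))).
    by apply: eq_bigr => nu _; rewrite add0r /lin scalerDr scale_polyC.
  by rewrite scaler_prod (big_nth 0) big_mkord prodr_const card_ord.
suff al_pow : al ^+ size s = al by rewrite orbpZ al_pow.
have c1 : orbp`_1 != 0.
  rewrite /orbp (perm_big _ (perm_to_rem s0)) big_cons polyC0 addr0.
  rewrite coefXM /= -horner_coef0 horner_prod prodf_seq_neq0.
  apply/allP => nu; rewrite mem_rem_uniq // inE => /andP [nu0 _] /=.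
  by rewrite hornerD hornerX hornerC add0r.
have := congr1 (fun p => p`_1) orbpZ; rewrite /= coef_comp_linZ coefZ expr1.
by move/(mulIf c1).
Qed.

Lemma transl_scale_invariantP g :
  ((forall b, b \in s -> g \Po lin 1 b = g) /\ g \Po lin al 0 = g) <->
  exists r, g = r \Po orbp ^+ l.
Proof.
split=> [[/transl_invariant_comp [q ->] ginv]|[r ->]].
  have qinv : q \Po lin al 0 = q.
    apply: (@comp_polyI _ orbp); first by rewrite size_orbp; case: (s) s0.
    rewrite -comp_polyA -[RHS]ginv -comp_polyA orbp_scale.
    by rewrite /lin addr0 comp_polyZ comp_polyX.
  have [r ->] := scale_invariant_Xn al_prim qinv.
  by exists r; rewrite -comp_polyA comp_Xn_poly.
split=> [b bs|]; rewrite -comp_polyA rmorphXn /=.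
  by rewrite orbp_transl.
by rewrite orbp_scale exprZn (prim_expr_order al_prim) scale1r.
Qed.

End Scaling.
End OrbitPolynomial.

Section FixedElements.
Context {F : fieldType}.
Variable h : {poly F}.

Lemma mulA_polyC1 (c : {poly F}) : Defs.mulA h c%:P 1 = c%:P.
Proof.
rewrite /Defs.mulA size_poly1 size_polyC.
have [->|cn0] := eqVneq c 0; first by rewrite big_ord0.
by rewrite !big_ord1 /= coefC coef1 /= mulr1 expr0 alg_polyC.
Qed.

Lemma substA_polyC u v (g : {poly F}) : substA h u v g%:P = (g \Po u)%:P.
Proof.
rewrite /substA size_polyC.
have [->|gn0] := eqVneq g 0; first by rewrite big_ord0 comp_poly0.
by rewrite big_ord1 coefC /= mulA_polyC1.
Qed.

Lemma fixedA_polyC (g : {poly F}) :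
  fixedA h g%:P <-> (forall al be, inP h al be -> g \Po lin al be = g).
Proof.
rewrite /fixedA /phiA /tauA; split.
  by case=> _ gP al be /gP; rewrite substA_polyC => /polyC_inj.
move=> gP; split=> [f|al be /gP ginv]; rewrite substA_polyC ?comp_polyXr //.
by rewrite ginv.
Qed.

Lemma iter_deltaH0 i : iter i (deltaH h) 0 = 0.
Proof. by elim: i => //= i ->; rewrite /deltaH deriv0 mulr0. Qed.

(* The yhat-free part of a product: only the terms m = i, j = 0 survive. *)
Lemma coef0_mulA (a b : AH F) :
  (Defs.mulA h a b)`_0 = \sum_(i < size a) a`_i * iter i (deltaH h) b`_0.
Proof.
rewrite /Defs.mulA coef_sum; apply: eq_bigr => i _; rewrite coef_sum.
case sb: (size b) => [|n].
  move/eqP: sb; rewrite size_poly_eq0 => /eqP ->.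
  by rewrite big_ord0 coef0 iter_deltaH0 mulr0.
rewrite big_ord_recl [X in _ + X]big1 ?addr0; last first.
  move=> j _; rewrite coef_sum big1 // => m _ /=.
  by rewrite coefZ coefXn /= addnS mulr0.
rewrite coef_sum big_ord_recr /= big1 ?add0r; last first.
  move=> m _; rewrite coefZ coefXn addn0 eq_sym subn_eq0 /=.
  by rewrite leqNgt ltn_ord /= mulr0.
by rewrite subnn coefZ coefXn /= binn mulr1n mulr1.
Qed.

Lemma coef0_mulA_polyC (c : {poly F}) b : (Defs.mulA h c%:P b)`_0 = c * b`_0.
Proof.
rewrite coef0_mulA size_polyC.
have [->|cn0] := eqVneq c 0; first by rewrite big_ord0 mul0r.
by rewrite big_ord1 coefC.
Qed.

Definition shift_coef0 (f : {poly F}) (i : nat) : {poly F} :=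
  iter i (fun c => f * c + deltaH h c) 1.

Lemma coef0_powA f i : (powA h ('X + f%:P) i)`_0 = shift_coef0 f i.
Proof.
elim: i => [|i IH]; first by rewrite /powA /= coef1.
rewrite /powA iterS -/(powA h _ i) coef0_mulA size_XaddC.
rewrite big_ord_recr big_ord1 /= IH.
by rewrite !coefD !coefX !coefC /= add0r addr0 mul1r.
Qed.

Lemma coef0_phiA f a :
  (phiA h f a)`_0 = \sum_(i < size a) a`_i * shift_coef0 f i.
Proof.
rewrite /phiA /substA coef_sum; apply: eq_bigr => i _.
by rewrite comp_polyXr coef0_mulA_polyC coef0_powA.
Qed.

(* For f = x^k with k >= size h the term f c_i dominates h c_i', so
   c_i is monic of degree i k. *)
Lemma shift_coef0_Xn k i : (size h <= k)%N ->
  shift_coef0 'X^k i \is monic /\ size (shift_coef0 'X^k i) = (i * k).+1.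
Proof.
move=> hk; elim: i => [|i [ci_monic ci_size]].
  by rewrite /shift_coef0 /= monic1 size_poly1.
rewrite /shift_coef0 iterS -/(shift_coef0 _ i).
set c := shift_coef0 _ i in ci_monic ci_size *.
have cn0 : c != 0 by rewrite -size_poly_eq0 ci_size.
have sXc : size ('X^k * c) = (k + (i * k).+1)%N.
  by rewrite mulrC size_mulXn // ci_size.
have sdc : (size (deltaH h c) < size ('X^k * c)%R)%N.
  rewrite sXc /deltaH; apply: leq_ltn_trans (size_polyMleq _ _) _.
  have := lt_size_deriv cn0; rewrite ci_size; lia.
split; first by rewrite monicE lead_coefDl // lead_coef_monicM ?monicXn // -monicE.
by rewrite size_polyDl // sXc; lia.
Qed.

Lemma size_shift_coef0_sum k n (a : nat -> {poly F}) :
  (size h <= k)%N -> (forall i, size (a i) < k)%N ->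
  (size (\sum_(i < n) a i * shift_coef0 'X^k i)%R <= n * k)%N.
Proof.
move=> hk ak; apply: (big_ind (fun p : {poly F} => size p <= n * k)%N).
- by rewrite size_poly0.
- by move=> p q hp hq; apply: leq_trans (size_polyD _ _) _; rewrite geq_max hp hq.
move=> i _; apply: leq_trans (size_polyMleq _ _) _.
have [_ ->] := shift_coef0_Xn k i hk.
have := ak i; have := ltn_ord i; nia.
Qed.

(* Elements fixed by all phi_f have no yhat: compare degrees in x of the
   yhat-free parts of a and phi_(x^k)(a) for k large. *)
Lemma phi_fixed_size a : (forall f, phiA h f a = a) -> (size a <= 1)%N.
Proof.
move=> a_fixed; rewrite leqNgt; apply/negP => ha.
set k := (size h + \sum_(i < size a) size (a`_i)%R).+1%N.
have hk : (size h <= k)%N by rewrite /k; lia.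
have ak i : (size (a`_i)%R < k)%N.
  case: (ltnP i (size a)) => hi; last by rewrite nth_default // size_poly0.
  rewrite /k (bigD1 (Ordinal hi)) //=; lia.
have := congr1 (fun p : AH F => p`_0) (a_fixed 'X^k); rewrite coef0_phiA /=.
case size_a: (size a) ha => [|n] //; rewrite ltnS => n_gt0.
have an0 : a`_n != 0 by rewrite -[n]/(n.+1.-1) -size_a -lead_coefE lead_coef_eq0
  -size_poly_eq0 size_a.
rewrite big_ord_recr /= addrC => a0E.
have [c_monic c_size] := shift_coef0_Xn k n hk.
have s_top : size (a`_n * shift_coef0 'X^k n) = (size (a`_n)%R + n * k)%N.
  by rewrite size_Mmonic // c_size addnS.
have s_low := size_shift_coef0_sum k n (fun i => a`_i) hk ak.
have : size (a`_0)%R = (size (a`_n)%R + n * k)%N.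
  rewrite -a0E size_polyDl s_top //; apply: leq_ltn_trans s_low _.
  by rewrite -addn1 addnC leq_add2r size_poly_gt0.
have := ak 0%N; have : (0 < size (a`_n)%R)%N by rewrite size_poly_gt0.
nia.
Qed.

Lemma fixedA_polyCP (a : AH F) :
  fixedA h a <-> exists g : {poly F}, a = g%:P /\ fixedA h g%:P.
Proof.
split=> [a_fixed|[g [-> //]]].
have sa := @phi_fixed_size a a_fixed.1.
by exists a`_0; rewrite -(size1_polyC sa).
Qed.

End FixedElements.

Lemma infinite_uniq_seq {F : fieldType} :
  ~ (exists s : seq F, forall c : F, c \in s) ->
  forall n, exists s : seq F, [/\ uniq s, size s = n & 0 \notin s].
Proof.
move=> F_infinite; elim=> [|n [s [us ss s0]]]; first by exists [::].
have [c cn] : exists c, c \notin 0 :: s.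
  apply: NNPP => no_fresh; apply: F_infinite; exists (0 :: s) => c.
  by apply: NNPP => hc; apply: no_fresh; exists c; apply/negP.
move: cn; rewrite inE negb_or => /andP [c0 cs].
by exists (c :: s); rewrite /= cs us ss inE negb_or eq_sym c0.
Qed.

(* Over an infinite field, a polynomial invariant under affine maps
   x |-> al x + b with every slope al != 0 is constant: its leading
   coefficient forces al^(deg g) = 1 for all al != 0. *)
Lemma all_slopes_invariant_const {F : fieldType} (g : {poly F}) :
  ~ (exists s : seq F, forall c : F, c \in s) ->
  (forall al : F, al != 0 -> exists b, g \Po lin al b = g) ->
  exists c : F, g = c%:P.
Proof.
move=> F_infinite ginv; suff sg : (size g <= 1)%N by exists g`_0; apply: size1_polyC.
rewrite leqNgt; apply/negP => sg; set d := (size g).-1.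
have d_gt0 : (0 < d)%N by rewrite /d; case: (size g) sg => [|[]].
have lg : lead_coef g != 0 by rewrite lead_coef_eq0 -size_poly_eq0; case: (size g) sg.
have unit_root (al : F) : al != 0 -> root ('X^d - 1) al.
  move=> al0; have [b gb] := ginv al al0.
  have := congr1 lead_coef gb; rewrite lead_coef_comp ?size_lin // lead_lin //.
  rewrite -[X in _ = X]mulr1 => /(mulfI lg) al_d.
  by rewrite /root hornerD hornerN hornerXn hornerC al_d subrr.
have [s [us ss s0]] := infinite_uniq_seq F_infinite d.+1.
have roots : all (root ('X^d - 1)) s.
  by apply/allP => x xs; apply: unit_root; apply: contraNneq s0 => <-.
have nz : ('X^d - 1 : {poly F}) != 0 by rewrite -size_poly_eq0 size_XnsubC.
by have := max_poly_roots nz roots us; rewrite size_XnsubC // ss ltnn.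
Qed.

(* The affine pair (al, be)^k, for al != 1: al^k x + c (al^k - 1), where
   c = be / (al - 1) is the fixed point of x |-> al x + be (up to sign). *)
Lemma apowE (F : fieldType) (al be : F) k : al != 1 ->
  apow (al, be) k = (al ^+ k, be / (al - 1) * (al ^+ k - 1)).
Proof.
move=> al1; have a1 : al - 1 != 0 by rewrite subr_eq0.
set c := be / (al - 1); have hc : be = c * (al - 1) by rewrite /c divfK.
elim: k => [|k IH]; first by rewrite /apow /= expr0 subrr mulr0.
rewrite /apow iterS -/(apow _ k) IH /acomp /= exprS; congr (_, _).
by rewrite {1}hc; ring.
Qed.

Section Invariants.
Context {F : fieldType}.
Variable h : {poly F}.

(* h = ga (x - la)^n is homogeneous around la, so every slope occurs in P. *)
Lemma inP_power {ga la n al} : h = ga *: ('X - la%:P) ^+ n -> ga != 0 ->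
  al != 0 -> inP h al (la - al * la).
Proof.
move=> hE ga0 al0; rewrite /inP al0 /=.
have Xla : ('X - la%:P) \Po lin al (la - al * la) = al *: ('X - la%:P).
  rewrite comp_polyB comp_polyX comp_polyC /lin scalerBr scale_polyC polyCB.
  by rewrite addrA addrAC addrK.
rewrite [X in X \Po _]hE comp_polyZ rmorphXn /= Xla hE size_scale //.
by rewrite size_exp_XsubC /= exprZn scalerA mulrC -scalerA.
Qed.

Lemma inP_transl nu : inP h 1 nu = (h \Po lin 1 nu == h).
Proof. by rewrite /inP /lin oner_eq0 expr1n !scale1r. Qed.

Section TranslationGroup.
Variable s : seq F.
Hypotheses (s_uniq : uniq s) (s_G : forall nu, nu \in s <-> inP h 1 nu).

Lemma G0 : 0 \in s.
Proof. by apply/s_G; rewrite inP_transl comp_lin10. Qed.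

Lemma G_addr a b : a \in s -> b \in s -> a + b \in s.
Proof.
rewrite !s_G !inP_transl => /eqP ha /eqP hb.
have -> : lin 1 (a + b) = lin 1 a \Po lin 1 b by rewrite lin_comp !mul1r addrC.
by rewrite comp_polyA ha hb.
Qed.

Lemma G_mulr al be nu : inP h al be -> nu \in s -> al * nu \in s.
Proof.
case/andP => al0 /eqP hP; rewrite !s_G !inP_transl => /eqP hnu.
apply/eqP; apply: (@comp_lin_inj _ al be _ _ al0); rewrite -comp_polyA.
have -> : lin 1 (al * nu) \Po lin al be = lin al be \Po lin 1 nu.
  by rewrite !lin_comp !mul1r mulr1 addrC.
by rewrite comp_polyA [h \Po lin al be]hP comp_polyZ hnu.
Qed.

Lemma transl_group_invariants :
  (forall al be, inP h al be -> al = 1) ->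
  forall g, fixedA h g%:P <-> exists q, g = q \Po orbp s.
Proof.
move=> slopes1 g; rewrite fixedA_polyC -transl_invariantP ?G0 //; last exact: G_addr.
split=> [ginv b bs|ginv al be hP]; first by apply: ginv; apply/s_G.
by have al1 := slopes1 _ _ hP; subst al; apply: ginv; apply/s_G.
Qed.

(* Let c = be / (al - 1) be the centre of x |-> al x + be. *)
Lemma P_invariant_centered al be g : inP h al be -> al != 1 ->
  (forall a b, inP h a b ->
     exists k nu, nu \in s /\ (a, b) = acomp (apow (al, be) k) (1, nu)) ->
  let g' := g \Po lin 1 (- (be / (al - 1))) in
  (forall a b, inP h a b -> g \Po lin a b = g) <->
  (forall nu, nu \in s -> g' \Po lin 1 nu = g') /\ g' \Po lin al 0 = g'.
Proof.
move=> hP al1 gen; set c := be / (al - 1) => g'.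
have be_c : be = c * (al - 1) by rewrite /c divfK // subr_eq0.
have gE : g = g' \Po lin 1 c by rewrite /g' -[c in lin 1 c]opprK comp_lin1K.
split=> [ginv|[g'_transl g'_scale] a b hab].
  split=> [nu nus|]; rewrite /g' -comp_polyA.
    have -> : lin 1 (- c) \Po lin 1 nu = lin 1 nu \Po lin 1 (- c).
      by rewrite !lin_comp; congr lin; ring.
    by rewrite comp_polyA [g \Po lin 1 nu]ginv //; apply s_G.
  have -> : lin 1 (- c) \Po lin al 0 = lin al be \Po lin 1 (- c).
    by rewrite !lin_comp be_c; congr lin; ring.
  by rewrite comp_polyA [g \Po lin al be]ginv.
have [k [nu [nus]]] := gen a b hab; rewrite apowE // /acomp /=.
case=> -> ->; rewrite gE -comp_polyA.
have -> : lin 1 c \Po lin (al ^+ k * 1) (1 * (c * (al ^+ k - 1)) + nu) =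
    lin 1 nu \Po (lin (al ^+ k) 0 \Po lin 1 c).
  by rewrite !lin_comp; congr lin; ring.
by rewrite !comp_polyA [g' \Po lin 1 nu]g'_transl // comp_lin_scale_expr.
Qed.

(* (ii)(b): by P_invariant_centered and transl_scale_invariantP, g(x - c) is a
   polynomial in orbp^l, i.e. g is a polynomial in orbp(x + c)^l. *)
Lemma transl_scale_group_invariants al be l :
  inP h al be -> (1 < l)%N -> l.-primitive_root al ->
  (forall a b, inP h a b ->
     exists k nu, nu \in s /\ (a, b) = acomp (apow (al, be) k) (1, nu)) ->
  forall g, fixedA h g%:P <->
    exists r, g = r \Po \prod_(nu <- s) ('X + (be / (al - 1) + nu)%:P) ^+ l.
Proof.
move=> hP l_gt1 prim gen g.
have al1 : al != 1.
  apply/eqP => al1; have := prim_order_dvd prim 1.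
  by rewrite al1 expr1 eqxx dvdn1 gtn_eqF.
have s_mulr nu : nu \in s -> al * nu \in s := G_mulr al be nu hP.
rewrite fixedA_polyC (P_invariant_centered al be g hP al1 gen) /=.
rewrite (@transl_scale_invariantP _ s s_uniq G0 G_addr al l prim s_mulr).
set c := be / (al - 1).
have -> : \prod_(nu <- s) ('X + (c + nu)%:P) ^+ l = (orbp s \Po lin 1 c) ^+ l.
  by rewrite prodrXl orbp_comp_lin; congr (_ ^+ _); apply: eq_bigr => nu _; rewrite linX.
split=> [[r g'E]|[r gr]]; exists r.
  by rewrite -[c in lin 1 c]opprK -[g](comp_lin1K (- c)) g'E -comp_polyA rmorphXn.
by rewrite gr -comp_polyA rmorphXn /= comp_lin1K.
Qed.

End TranslationGroup.

Lemma torus_invariants ga la n : (1 < size h)%N ->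
  h = ga *: ('X - la%:P) ^+ n -> ~ (exists s : seq F, forall c : F, c \in s) ->
  forall g, fixedA h g%:P <-> exists c, g = c%:P.
Proof.
move=> sh hE F_infinite g; rewrite fixedA_polyC.
have ga0 : ga != 0 by apply: contraTneq sh => ga0; rewrite hE ga0 scale0r size_poly0.
split=> [ginv|[c ->] al be _]; last by rewrite comp_polyC.
apply: all_slopes_invariant_const F_infinite _ => al al0.
by exists (la - al * la); apply: ginv; apply: (inP_power hE ga0 al0).
Qed.

End Invariants.

Theorem theorem8p9 (F : fieldType) (h : {poly F}) :
  (1 < size h)%N ->
  (* A_h^A = F[x]^A *)
  (forall a : AH F, fixedA h a <-> exists g : {poly F}, a = g%:P /\ fixedA h g%:P) /\
  (* (i), first part: A = {phi_f} *)
  ((forall al be, inP h al be -> al = 1 /\ be = 0) ->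
     forall g : {poly F}, fixedA h g%:P) /\
  (* (i), second part: h = gamma (x - lambda)^n, F infinite *)
  (forall (ga la : F) (n : nat), h = ga *: ('X - la%:P) ^+ n ->
     ~ (exists s : seq F, forall c : F, c \in s) ->
     forall g : {poly F}, fixedA h g%:P <-> exists c : F, g = c%:P) /\
  (* (ii): s enumerates G = {nu : (1,nu) in P} *)
  (forall s : seq F, uniq s -> (forall nu, nu \in s <-> inP h 1 nu) ->
     ((* (a) tau_P = tau_{1,G} *)
      (forall al be, inP h al be -> al = 1) ->
      forall g : {poly F}, fixedA h g%:P <->
        exists q : {poly F}, g = q \Po \prod_(nu <- s) ('X + nu%:P)) /\
     ((* (b) tau_P = tau_{1,G} ⋊ <tau_{alpha,beta}>, alpha primitive l-th root *)
      forall (al be : F) (l : nat), inP h al be -> (1 < l)%N ->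
      l.-primitive_root al ->
      (forall a b, inP h a b ->
         exists k nu, nu \in s /\ (a, b) = acomp (apow (al, be) k) (1, nu)) ->
      forall g : {poly F}, fixedA h g%:P <->
        exists q : {poly F},
          g = q \Po \prod_(nu <- s) ('X + (be / (al - 1) + nu)%:P) ^+ l)).
Proof.
move=> sh; split; first exact: fixedA_polyCP.
split.
  move=> P_trivial g; apply/fixedA_polyC => al be /P_trivial [-> ->].
  exact: comp_lin10.
split; first by move=> ga la n; apply: torus_invariants.
move=> s s_uniq s_G; split; first exact: transl_group_invariants.
exact: transl_scale_group_invariants.
Qed.
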